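(* Let $G$ be a connected planar trivalent graph with a perfect matching $M$. If $G$ contains a bridge, then $\langle G:M\rangle_2(1)=0$ and $|G:M|_2=0$.
   Context: Graphs are finite and may have multiple edges; trivalent means every vertex has degree $3$. A bridge is an edge whose removal disconnects the graph. $|G:M|_2$ denotes the number of $2$-factors (spanning subgraphs in which every vertex has degree $2$) of $G$ containing every edge of $M$. The $2$-factor polynomial $\langle G:M\rangle_2(z)\in\mathbb{Z}[z,z^{-1}]$ is defined as follows. Embed $G$ in the $2$-sphere. For a matching edge $e=uv$, let $\alpha,\beta$ be the other two edge-ends at $u$ and $\gamma,\delta$ the other two at $v$, labelled so that in a small disk around $e$ they appear in cyclic order $\alpha,\beta,\delta,\gamma$. The $0$-resolution at $e$ deletes $e,u,v$ and joins $\alpha$ to $\gamma$ and $\beta$ to $\delta$ by disjoint arcs; the $1$-resolution joins $\alpha$ to $\delta$ and $\beta$ to $\gamma$ by two arcs crossing once. For a state $s:M\to\{0,1\}$, resolving every matching edge accordingly yields $c(s)$ immersed closed curves, and $\langle G:M\rangle_2(z)=\sum_s(-z)^{|s|}(z+z^{-1})^{c(s)}$, where $|s|$ is the number of edges assigned $1$. This is independent of the chosen embedding. *)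

From mathcomp Require Import all_boot all_order all_algebra all_fingroup.
Set Implicit Arguments. Unset Strict Implicit. Unset Printing Implicit Defensive.
Import GRing.Theory.
Local Open Scope ring_scope.

Section TwoFactor.
Variables (V D : finType) (vert : D -> V) (alpha : D -> D).

(* A (multi)graph with vertex set V and dart set D: [alpha] pairs the two
   darts (ends) of each edge, [vert d] is the vertex at which dart d lies.
   Edges are the pairs {d, alpha d}; loops are allowed. *)
Definition dart_graph : Prop := involutive alpha /\ forall d, alpha d != d.

(* every vertex has degree 3 (a loop contributes 2) *)
Definition trivalent : Prop := forall v, #|[set d | vert d == v]| = 3%N.

Definition adj : rel V :=
  fun u w => [exists d, (vert d == u) && (vert (alpha d) == w)].

Definition connected_graph : Prop := forall u w, connect adj u w.

Definition adj_minus (d0 : D) : rel V :=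
  fun u w => [exists d, [&& d != d0, d != alpha d0, vert d == u & vert (alpha d) == w]].

Definition is_bridge (d0 : D) : Prop := ~ (forall u w, connect (adj_minus d0) u w).

(* a set of darts closed under alpha = a set of edges *)
Definition edge_set (F : {set D}) : bool := [forall d, (d \in F) == (alpha d \in F)].

Definition perfect_matching (M : {set D}) : Prop :=
  edge_set M /\ forall v, #|[set d in M | vert d == v]| = 1%N.

Definition two_factor (F : {set D}) : bool :=
  edge_set F && [forall v, #|[set d in F | vert d == v]| == 2%N].

Definition num_2factors (M : {set D}) : nat :=
  #|[set F : {set D} | two_factor F && (M \subset F)]|.

(* Embedding in the sphere, as a rotation system: [rot] cyclically permutes
   the darts at each vertex; the faces are the orbits of d |-> rot (alpha d);
   genus 0 (for a connected graph) is Euler's formula V - E + F = 2. *)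
Definition rotation_system (rot : {perm D}) : Prop :=
  (forall d, vert (rot d) = vert d) /\
  (forall d e, vert d = vert e -> fconnect rot d e).

Definition face_perm (rot : {perm D}) (d : D) : D := rot (alpha d).

Definition spherical_embedding (rot : {perm D}) : Prop :=
  rotation_system rot /\
  (#|V| + fcard (face_perm rot) D = #|D| %/ 2 + 2)%N.

Variables (rot : {perm D}) (M : {set D}).

(* A state is given by the set S of darts of the matching edges assigned 1. *)
Definition is_state (S : {set D}) : bool := (S \subset M) && edge_set S.

(* Resolution pairing on the darts of non-matching edges.  For a matching edge
   with dart m at u and m' = alpha m at v, the other ends at u are rot m and
   rot^2 m, at v are rot m' and rot^2 m'; in the disk around the edge they
   appear in cyclic order rot m, rot^2 m, rot m', rot^2 m' (= alpha, beta,
   delta, gamma).  The 0-resolution pairs rot m with rot^2 m' and rot^2 m with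
   rot m'; the 1-resolution pairs rot m with rot m' and rot^2 m with rot^2 m'. *)
Definition res (S : {set D}) (d : D) : D :=
  if rot d \in M then
    (* d = rot^2 m with m = rot d *)
    let m' := alpha (rot d) in
    if rot d \in S then rot (rot m') else rot m'
  else
    (* d = rot m with m = rot^-1 d *)
    let m := (rot^-1)%g d in
    let m' := alpha m in
    if m \in S then rot m' else rot (rot m').

(* curves: components of the darts of non-matching edges under the edge
   pairing alpha and the resolution pairing *)
Definition curve_rel (S : {set D}) : rel D :=
  fun d e => [&& d \notin M, e \notin M &
                 [|| e == alpha d, e == res S d | d == res S e]].

Definition num_curves (S : {set D}) : nat :=
  n_comp (curve_rel S) [pred d | d \notin M].

Definition two_factor_poly (R : fieldType) (z : R) : R :=
  \sum_(S : {set D} | is_state S)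
     (- z) ^+ (#|S| %/ 2) * (z + z^-1) ^+ num_curves S.

End TwoFactor.

(* A bridge c of a connected trivalent graph cuts off a vertex set A that only c
   leaves.  Counting the darts at A of an edge set F shows that this number is
   odd iff c lies in F.  For F the whole edge set this makes |A| odd, so the
   perfect matching contains c, whereas no 2-factor does.

   At z = 1, toggling the state of c flips the sign (-1)^(|S|/2) and keeps the
   number of curves: the same parity count, applied to the darts reachable from
   one end of c along curves that stay on one side, shows that the two strands at
   each end of c always lie on a common curve, so re-pairing them at c changes
   nothing. *)

From Pilot Require Import Defs.
From mathcomp Require Import all_boot all_order all_algebra all_fingroup.
Set Implicit Arguments. Unset Strict Implicit. Unset Printing Implicit Defensive.
Import GRing.Theory Num.Theory.

Lemma fixfree_involution_card_even (T : finType) (X : {set T}) (f : T -> T) :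
  {in X, forall z, f z \in X} -> {in X, forall z, f z != z} ->
  {in X, forall z, f (f z) = z} -> ~~ odd #|X|.
Proof.
move=> fX f_neq fK.
pose Y := [set z in X | enum_rank z < enum_rank (f z)].
have f_inj : {in Y &, injective f}.
  by move=> a b /setIdP[aX _] /setIdP[bX _] eq_f; rewrite -(fK a) // -(fK b) // eq_f.
have XE : X = Y :|: f @: Y.
  apply/setP => z; rewrite !inE; apply/idP/idP => [zX | ].
    rewrite zX /=; case: ltngtP => // [lt_fz | /val_inj/enum_rank_inj eq_fz].
      by apply/imsetP; exists (f z); rewrite ?fK // inE fX //= fK.
    by have := f_neq z zX; rewrite -eq_fz eqxx.
  by case/orP => [/andP[] // | /imsetP[w /setIdP[wX _] ->]]; apply: fX.
have YfY0 : Y :&: f @: Y = set0.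
  apply/setP => z; rewrite !inE; apply/negP => /andP[/andP[_ lt_z] /imsetP[w]].
  case/setIdP=> wX lt_w eq_z; move: lt_z; rewrite eq_z fK // => lt_fw.
  by have := ltn_trans lt_fw lt_w; rewrite ltnn.
have := cardsUI Y (f @: Y); rewrite -XE YfY0 cards0 addn0 card_in_imset // => ->.
by rewrite addnn odd_double.
Qed.

Lemma connect_fwd_closed (T : finType) (e : rel T) (a : pred T) :
  (forall x y, e x y -> a x -> a y) -> forall x y, connect e x y -> a x -> a y.
Proof.
move=> cl_a x y /connectP[p e_p ->]; elim: p x e_p => //= z p IHp x /andP[e_xz e_p] ax.
exact: IHp e_p (cl_a _ _ e_xz ax).
Qed.

Definition toggle (T : finType) (E S : {set T}) : {set T} := (S :\: E) :|: (E :\: S).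

Lemma in_toggle (T : finType) (E S : {set T}) x :
  (x \in toggle E S) = (x \in S) (+) (x \in E).
Proof. by rewrite !inE; case: (x \in S); case: (x \in E). Qed.

Lemma toggleK (T : finType) (E : {set T}) : involutive (toggle E).
Proof. by move=> S; apply/setP => x; rewrite !in_toggle addbK. Qed.

Section DartGraph.

Variables (V D : finType) (vert : D -> V) (alpha : D -> D).
Hypothesis alphaK : involutive alpha.
Hypothesis alpha_fixfree : forall d, alpha d != d.

Lemma edge_set_alpha (S : {set D}) d : edge_set alpha S -> (alpha d \in S) = (d \in S).
Proof. by move/forallP/(_ d)/eqP. Qed.

Definition edge_darts (c : D) : {set D} := [set c; alpha c].

Lemma edge_set_edge_darts c : edge_set alpha (edge_darts c).
Proof.
apply/forallP => d.
by rewrite !inE (can2_eq alphaK alphaK) (inj_eq (can_inj alphaK)) orbC.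
Qed.

Definition one_edge_cut (A : {set V}) (c : D) : Prop :=
  [/\ vert c \in A, vert (alpha c) \notin A &
      forall d, d != c -> vert d \in A -> vert (alpha d) \in A].

Lemma one_edge_cutC A c : one_edge_cut A c -> one_edge_cut (~: A) (alpha c).
Proof.
case=> cA acA cutA; split; rewrite ?inE ?alphaK ?negbK // => d d_ac.
rewrite !inE; apply: contraNN => adA; rewrite -[d]alphaK cutA //.
by apply: contraNneq d_ac => <-; rewrite alphaK.
Qed.

Lemma bridge_one_edge_cut d0 :
  connected_graph vert alpha -> is_bridge vert alpha d0 -> exists A c, one_edge_cut A c.
Proof.
move=> conn bridge.
have /existsP[u /existsP[w not_uw]] :
    [exists u, exists w, ~~ connect (adj_minus vert alpha d0) u w].
  apply: contraT => /existsPn all_uw; case: bridge => u w.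
  by have /existsPn/(_ w)/negPn := all_uw u.
pose A := [set x | connect (adj_minus vert alpha d0) u x].
have leave_bridge c : vert c \in A -> vert (alpha c) \notin A -> (c == d0) || (c == alpha d0).
  rewrite !inE => uc; apply: contraR; rewrite negb_or => /andP[c_d0 c_ad0].
  by apply: connect_trans uc (connect1 _); apply/existsP; exists c; rewrite c_d0 c_ad0 !eqxx.
have [c /andP[cA acA] | stay] := pickP [pred c | (vert c \in A) && (vert (alpha c) \notin A)].
  exists A, c; split=> // d d_c dA; apply: contraT => adA.
  have d_ac : d = alpha c.
    move: (leave_bridge d dA adA) (leave_bridge c cA acA) d_c.
    by case/orP=> /eqP-> /orP[]/eqP->; rewrite ?eqxx ?alphaK.
  by move: adA; rewrite d_ac alphaK cA.
have uA : u \in A by rewrite inE connect0.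
suff : w \in A by rewrite inE (negbTE not_uw).
apply: connect_fwd_closed (conn u w) uA => x y /existsP[d /andP[/eqP <- /eqP <-]] dA.
by apply: contraFT (stay d) => adA; apply/andP.
Qed.

Lemma card_darts_at (F : {set D}) (A : {set V}) k :
  (forall v, #|[set d in F | vert d == v]| = k) ->
  #|[set d in F | vert d \in A]| = k * #|A|.
Proof.
move=> degF; rewrite -sum1_card (partition_big vert (mem A)) /=; last first.
  by move=> d; rewrite inE => /andP[].
rewrite mulnC -sum_nat_const; apply: eq_bigr => v vA.
rewrite -(degF v) -sum1_card; apply: eq_bigl => d; rewrite !inE.
by case: (d \in F) => //=; case: eqP => [->|]; rewrite ?vA ?andbF.
Qed.

Section OneEdgeCut.

Variables (A : {set V}) (c : D).
Hypothesis cutAc : one_edge_cut A c.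

Lemma odd_card_cut (F : {set D}) :
  edge_set alpha F -> odd #|[set d in F | vert d \in A]| = (c \in F).
Proof.
case: cutAc => cA acA cutA edgeF.
rewrite (cardsD1 c) inE cA andbT oddD oddb.
suff /negbTE-> : ~~ odd #|[set d in F | vert d \in A] :\ c| by rewrite addbF.
apply: (fixfree_involution_card_even (f := alpha)) => d /setD1P[d_c /setIdP[dF dA]].
- rewrite !inE edge_set_alpha // dF cutA // !andbT.
  by apply: contraNneq acA => <-; rewrite alphaK.
- exact: alpha_fixfree.
- exact: alphaK.
Qed.

Lemma cut_edge_matched M :
  trivalent vert -> perfect_matching vert alpha M -> c \in M.
Proof.
move=> tri [edgeM degM].
have oddA : odd #|A|.
  have edgeT : edge_set alpha [set: D] by apply/forallP => d; rewrite !inE.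
  have := odd_card_cut edgeT; rewrite (@card_darts_at _ _ 3) ?inE ?oddM //.
  by move=> v; rewrite -(tri v); apply: eq_card => d; rewrite !inE.
by rewrite -(odd_card_cut edgeM) (@card_darts_at _ _ 1) // mul1n.
Qed.

Lemma cut_edge_notin_two_factor (F : {set D}) : two_factor vert alpha F -> c \notin F.
Proof.
case/andP=> edgeF /forallP degF.
by rewrite -(odd_card_cut edgeF) (@card_darts_at _ _ 2) ?oddM // => v; apply/eqP.
Qed.

Lemma num_2factors_cut_eq0 (M : {set D}) : c \in M -> num_2factors vert alpha M = 0.
Proof.
move=> cM; apply: eq_card0 => F; rewrite !inE; apply/negbTE/andP => [[twoF MF]].
by have /negP[] := cut_edge_notin_two_factor twoF; apply: (subsetP MF).
Qed.

End OneEdgeCut.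

End DartGraph.

Section CubicRotation.

Variables (V D : finType) (vert : D -> V) (alpha : D -> D) (rot : {perm D}) (M : {set D}).
Hypothesis alphaK : involutive alpha.
Hypothesis alpha_fixfree : forall d, alpha d != d.
Hypothesis tri : trivalent vert.
Hypothesis rot_vert : forall d, vert (rot d) = vert d.
Hypothesis rot_conn : forall d e, vert d = vert e -> fconnect rot d e.
Hypothesis edgeM : edge_set alpha M.
Hypothesis degM : forall v, #|[set d in M | vert d == v]| = 1%N.

Lemma orbit_rot d : fingraph.orbit rot d = [:: d; rot d; rot (rot d)].
Proof.
suff order3 : fingraph.order rot d = 3 by rewrite /fingraph.orbit order3.
rewrite /fingraph.order -(tri (vert d)); apply: eq_card => e; rewrite inE.
apply/idP/eqP => [|/esym/rot_conn //].
move=> de; symmetry; apply: fconnect_invariant de => x; exact/eqP/rot_vert.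
Qed.

Lemma rot3 d : rot (rot (rot d)) = d.
Proof. by have := iter_order (@perm_inj _ rot) d; rewrite -size_orbit orbit_rot. Qed.

Lemma rotV d : (rot^-1)%g d = rot (rot d).
Proof. by rewrite -{1}(rot3 d) permK. Qed.

Lemma rot_vert_cases d e : vert d = vert e -> [\/ e = d, e = rot d | e = rot (rot d)].
Proof.
move/rot_conn; rewrite fconnect_orbit orbit_rot !inE.
by case/or3P => /eqP->; [constructor 1 | constructor 2 | constructor 3].
Qed.

Lemma vert_inj_matching : {in M &, injective vert}.
Proof.
move=> m1 m2 m1M m2M eq_v; have /eqP/cards1P[x Mx] := degM (vert m1).
have : m1 \in [set d in M | vert d == vert m1] by rewrite inE m1M eqxx.
have : m2 \in [set d in M | vert d == vert m1] by rewrite inE m2M eq_v eqxx.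
by rewrite Mx !inE => /eqP-> /eqP->.
Qed.

Lemma matching_dart_at v : exists2 m, m \in M & vert m = v.
Proof.
have /eqP/cards1P[m Mm] := degM v.
have /setIdP[mM /eqP mv] : m \in [set d in M | vert d == v] by rewrite Mm set11.
by exists m.
Qed.

Lemma rot_notin_matching m :
  m \in M -> (rot m \notin M) && (rot (rot m) \notin M).
Proof.
move=> mM; have := orbit_uniq rot m; rewrite orbit_rot /= !inE !negb_or.
case/andP=> /andP[m_rm m_rrm] _; apply/andP; split.
  by apply: contraNN m_rm => rmM; apply/eqP/(vert_inj_matching mM rmM); rewrite rot_vert.
by apply: contraNN m_rrm => rmM; apply/eqP/(vert_inj_matching mM rmM); rewrite !rot_vert.
Qed.

Lemma unmatched_at_matched m z :
  m \in M -> z \notin M -> vert z = vert m -> z = rot m \/ z = rot (rot m).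
Proof.
move=> mM zM /esym/rot_vert_cases[eq_z | -> | ->]; [by rewrite eq_z mM in zM | by left | by right].
Qed.

Lemma unmatched_at_matched_pair m x y z :
  m \in M -> x != y -> [/\ x \notin M, y \notin M & z \notin M] ->
  [/\ vert x = vert m, vert y = vert m & vert z = vert m] -> z = x \/ z = y.
Proof.
move=> mM + [xM yM zM] [xm ym zm].
have [->|->] := unmatched_at_matched mM zM zm; have [->|->] := unmatched_at_matched mM xM xm;
  have [->|->] := unmatched_at_matched mM yM ym; rewrite ?eqxx; by [left | right].
Qed.

(* For x \notin M: the matching dart at vert x, i.e. the dart m in the definition of res. *)
Definition matching_dart (x : D) : D := if rot x \in M then rot x else (rot^-1)%g x.

Lemma matching_dart_in x : x \notin M -> matching_dart x \in M.
Proof.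
rewrite /matching_dart rotV; case: ifP => // rxM xM.
have [m mM /esym/rot_vert_cases[eq_m|eq_m|eq_m]] := matching_dart_at (vert x);
  by rewrite -eq_m // ?mM in xM rxM *.
Qed.

Lemma matching_dart_vert x : vert (matching_dart x) = vert x.
Proof. by rewrite /matching_dart rotV; case: ifP; rewrite !rot_vert. Qed.

Local Notation res := (res alpha rot M).
Local Notation curve_rel := (curve_rel alpha rot M).

Lemma res_agree (S S' : {set D}) x :
  (matching_dart x \in S') = (matching_dart x \in S) -> res S' x = res S x.
Proof. by rewrite /Defs.res /matching_dart; case: ifP => _ ->. Qed.

Lemma res_cases (S : {set D}) x :
  res S x = rot (alpha (matching_dart x)) \/ res S x = rot (rot (alpha (matching_dart x))).
Proof. by rewrite /Defs.res /matching_dart; do 2!case: ifP => _; auto. Qed.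

Lemma res_vert (S : {set D}) x : vert (res S x) = vert (alpha (matching_dart x)).
Proof. by case: (res_cases S x) => ->; rewrite !rot_vert. Qed.

Lemma res_notin_matching (S : {set D}) x : x \notin M -> res S x \notin M.
Proof.
move=> xM; have amM : alpha (matching_dart x) \in M.
  by rewrite edge_set_alpha // matching_dart_in.
by have /andP[] := rot_notin_matching amM; case: (res_cases S x) => ->.
Qed.

Lemma res_rot2 (S : {set D}) m : m \in M ->
  res S (rot (rot m)) = if m \in S then rot (rot (alpha m)) else rot (alpha m).
Proof. by move=> mM; rewrite /Defs.res rot3 mM. Qed.

Lemma res_rot (S : {set D}) m : m \in M ->
  res S (rot m) = if m \in S then rot (alpha m) else rot (rot (alpha m)).
Proof.
by move=> mM; have /andP[_ /negbTE rrmM] := rot_notin_matching mM; rewrite /Defs.res rrmM permK.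
Qed.

Lemma resK (S : {set D}) x : edge_set alpha S -> x \notin M -> res S (res S x) = x.
Proof.
move=> edgeS xM; have := matching_dart_in xM; rewrite {2}/Defs.res /matching_dart.
case: ifP => [_ rxM | _ rxM].
  have arxM : alpha (rot x) \in M by rewrite edge_set_alpha.
  by case: ifP => rxS; [rewrite res_rot2 | rewrite res_rot];
    rewrite // edge_set_alpha // rxS alphaK rot3.
have arxM : alpha ((rot^-1)%g x) \in M by rewrite edge_set_alpha.
by case: ifP => rxS; [rewrite res_rot | rewrite res_rot2];
  rewrite // edge_set_alpha // rxS alphaK permKV.
Qed.

Lemma res_neq (S : {set D}) x : x \notin M -> res S x != x.
Proof.
move=> xM; apply/eqP => eq_res; have mM := matching_dart_in xM.
have amM : alpha (matching_dart x) \in M by rewrite edge_set_alpha.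
have /eqP[] := alpha_fixfree (matching_dart x); apply: (vert_inj_matching amM mM).
by rewrite -(res_vert S x) eq_res matching_dart_vert.
Qed.

Lemma curve_rel_sym (S : {set D}) : symmetric (curve_rel S).
Proof.
move=> a b; rewrite /Defs.curve_rel [b == _]eq_sym (can2_eq alphaK alphaK).
by case: (a \in M); case: (b \in M); case: (a == alpha b); case: (b == res S a);
  case: (a == res S b).
Qed.

Lemma even_card_darts_at_cut (A : {set V}) m (S C : {set D}) :
  vert (alpha m) \notin A -> m \in M -> edge_set alpha S ->
  {subset C <= [pred z | (z \notin M) && (vert z \in A)]} ->
  {in C, forall z, alpha z \in C} ->
  {in C, forall z, vert z != vert m -> res S z \in C} ->
  ~~ odd #|[set z in C | vert z == vert m]|.
Proof.
move=> amA mM edgeS CU Calpha Cres.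
have evenC : ~~ odd #|C|.
  apply: (fixfree_involution_card_even (f := alpha)) => z zC;
    [exact: Calpha | exact: alpha_fixfree | exact: alphaK].
have evenC' : ~~ odd #|[set z in C | vert z != vert m]|.
  apply: (fixfree_involution_card_even (f := res S)) => z /setIdP[zC zm];
    have /andP[zM zA] := CU z zC; last 2 first.
  - exact: res_neq.
  - exact: resK.
  (* res z could only reach vert m from the other end alpha m of the matching edge. *)
  rewrite inE Cres //=; apply: contraNneq amA.
  rewrite res_vert => /(vert_inj_matching _ mM) eq_m.
  by rewrite -eq_m ?alphaK ?matching_dart_vert // edge_set_alpha // matching_dart_in.
move: evenC; rewrite -(cardsID [set z | vert z == vert m] C) oddD negb_add.
have -> : C :&: [set z | vert z == vert m] = [set z in C | vert z == vert m].
  by apply/setP => z; rewrite !inE.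
have -> : C :\: [set z | vert z == vert m] = [set z in C | vert z != vert m].
  by apply/setP => z; rewrite !inE andbC.
by rewrite (negbTE evenC') => /eqP->.
Qed.

Lemma connect_curve_at_cut (A : {set V}) m (S : {set D}) x y :
  one_edge_cut vert alpha A m -> m \in M -> edge_set alpha S ->
  x \notin M -> y \notin M -> vert x = vert m -> vert y = vert m ->
  connect (curve_rel S) x y.
Proof.
move=> [mA amA cutA] mM edgeS xM yM xm ym.
have [<- | neq_xy] := eqVneq x y; first exact: connect0.
pose U := [pred z | (z \notin M) && (vert z \in A)].
pose r := [rel a b | curve_rel S a b && (b \in U)].
(* If y were not reachable, x would be the only dart of K at vert m. *)
pose K := [set z | connect r x z].
have KU : {subset K <= U}.
  move=> z; rewrite inE => /connect_fwd_closed; apply=> [a b /andP[] // |].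
  by rewrite /= xM xm.
have K_r z w : z \in K -> r z w -> w \in K.
  by move=> + zw; rewrite !inE => xz; apply: connect_trans xz (@connect1 _ r z w zw).
have Kalpha : {in K, forall z, alpha z \in K}.
  move=> z zK; have /andP[zM zA] := KU z zK; apply: K_r zK _.
  have azM : alpha z \notin M by rewrite edge_set_alpha.
  have azA : vert (alpha z) \in A by apply: cutA zA; apply: contraNneq zM => ->.
  by rewrite /= /Defs.curve_rel zM azM eqxx inE azM azA.
have Kres : {in K, forall z, vert z != vert m -> res S z \in K}.
  move=> z zK zm; have /andP[zM zA] := KU z zK; apply: K_r zK _.
  have rM := res_notin_matching S zM.
  have rA : vert (res S z) \in A.
    rewrite res_vert cutA ?matching_dart_vert //.
    by apply: contraNneq zm => <-; rewrite matching_dart_vert.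
  by rewrite /= /Defs.curve_rel zM rM eqxx orbT inE rM rA.
have := even_card_darts_at_cut amA mM edgeS KU Kalpha Kres.
apply: contraNT => not_xy.
suff -> : [set z in K | vert z == vert m] = [set x] by rewrite cards1.
apply/setP => z; rewrite !inE; apply/andP/eqP => [[zK /eqP zm] | ->]; last first.
  by split; rewrite ?inE ?connect0 ?xm.
have /andP[zM _] : z \in U by apply: KU; rewrite inE.
case: (unmatched_at_matched_pair mM neq_xy (And3 xM yM zM) (And3 xm ym zm)) => // zy.
case/negP: not_xy; rewrite -zy.
by apply: connect_sub zK => a b /andP[ab _]; apply: connect1.
Qed.

Lemma connect_curve_at_cut_edge (A : {set V}) c m (S : {set D}) x y :
  one_edge_cut vert alpha A c -> c \in M -> edge_set alpha S -> m \in edge_darts alpha c ->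
  x \notin M -> y \notin M -> vert x = vert m -> vert y = vert m ->
  connect (curve_rel S) x y.
Proof.
move=> cutAc cM edgeS /set2P[->|->]; first exact: connect_curve_at_cut cutAc cM edgeS.
by apply: connect_curve_at_cut (one_edge_cutC alphaK cutAc) _ edgeS; rewrite edge_set_alpha.
Qed.

Section CutEdgeToggle.

Variables (A : {set V}) (c : D).
Hypothesis cutAc : one_edge_cut vert alpha A c.
Hypothesis cM : c \in M.

Local Notation E := (edge_darts alpha c).

Lemma connect_res_agree (S S' : {set D}) x :
  edge_set alpha S -> (forall m, m \notin E -> (m \in S') = (m \in S)) ->
  x \notin M -> connect (curve_rel S) x (res S' x).
Proof.
move=> edgeS agree xM.
have [mE | mE] := boolP (matching_dart x \in E); last first.
  rewrite (res_agree (agree _ mE)); apply: connect1.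
  by rewrite /Defs.curve_rel xM res_notin_matching // eqxx orbT.
have x_res : curve_rel S x (res S x).
  by rewrite /Defs.curve_rel xM res_notin_matching // eqxx orbT.
apply: connect_trans (connect1 x_res) _.
apply: (connect_curve_at_cut_edge (m := alpha (matching_dart x)) cutAc cM edgeS);
  rewrite ?res_notin_matching ?res_vert //.
by rewrite edge_set_alpha // edge_set_edge_darts.
Qed.

Lemma curve_rel_agree (S S' : {set D}) :
  edge_set alpha S -> (forall m, m \notin E -> (m \in S') = (m \in S)) ->
  subrel (curve_rel S') (connect (curve_rel S)).
Proof.
move=> edgeS agree x y /and3P[xM yM /or3P[] /eqP eq_y].
- by apply: connect1; rewrite /Defs.curve_rel xM yM eq_y eqxx.
- by rewrite eq_y; apply: connect_res_agree.
- by rewrite (sym_connect_sym (curve_rel_sym S)) eq_y; apply: connect_res_agree.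
Qed.

Lemma num_curves_agree (S S' : {set D}) :
  edge_set alpha S -> edge_set alpha S' ->
  (forall m, m \notin E -> (m \in S') = (m \in S)) ->
  num_curves alpha rot M S' = num_curves alpha rot M S.
Proof.
move=> edgeS edgeS' agree; apply: eq_n_comp => x y.
by apply/idP/idP; apply: connect_sub; apply: curve_rel_agree => // m /agree.
Qed.

Lemma is_state_toggle (S : {set D}) : is_state alpha M (toggle E S) = is_state alpha M S.
Proof.
have EM : E \subset M by apply/subsetP => d /set2P[]->; rewrite ?edge_set_alpha.
suff toggle_state S0 : is_state alpha M S0 -> is_state alpha M (toggle E S0).
  by apply/idP/idP => /toggle_state; rewrite ?toggleK.
case/andP=> S0M edgeS0; apply/andP; split.
  apply/subsetP => d; rewrite in_toggle.
  by case: (boolP (d \in S0)) => [/(subsetP S0M) // | _ /(subsetP EM)].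
apply/forallP => d.
by rewrite !in_toggle edge_set_alpha // [alpha d \in E]edge_set_alpha ?edge_set_edge_darts.
Qed.

Lemma card_toggle_edge (S : {set D}) : edge_set alpha S ->
  #|toggle E S| = #|S| + 2 \/ #|S| = #|toggle E S| + 2.
Proof.
move=> edgeS; have cardE : #|E| = 2 by rewrite cards2 eq_sym alpha_fixfree.
have [cS | cS] := boolP (c \in S).
  have ES : E \subset S by apply/subsetP => d /set2P[]->; rewrite ?edge_set_alpha.
  have -> : toggle E S = S :\: E by rewrite /toggle (eqP (_ : E :\: S == set0)) ?setU0 ?setD_eq0.
  by right; rewrite -(cardsID E S) (setIidPr ES) cardE addnC.
have disjES : [disjoint E & S].
  by rewrite disjoint_subset; apply/subsetP => d /set2P[]->; rewrite inE ?edge_set_alpha.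
have disjSE : [disjoint S & E] by rewrite disjoint_sym.
rewrite /toggle (setDidPl disjES) (setDidPl disjSE).
by left; rewrite cardsU (disjoint_setI0 disjSE) cards0 subn0 cardE.
Qed.

Local Open Scope ring_scope.

Lemma two_factor_poly1_eq0 (R : numFieldType) : two_factor_poly alpha rot M (1 : R) = 0.
Proof.
apply/eqP; rewrite -eqNr /two_factor_poly -sumrN; apply/eqP.
rewrite (reindex_inj (can_inj (toggleK E))) /=.
apply: eq_big => [S | S stateT]; first exact: is_state_toggle.
have /andP[_ edgeT] := stateT.
have /andP[_ edgeS] : is_state alpha M S by rewrite -is_state_toggle.
rewrite (@num_curves_agree S) => [|//|//|m mE]; last by rewrite in_toggle (negbTE mE) addbF.
have div2D2 n : ((n + 2) %/ 2 = (n %/ 2).+1)%N by rewrite divnDr ?dvdnn // divnn addn1.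
by case: (card_toggle_edge edgeS) => ->; rewrite div2D2 exprS mulN1r ?mulNr ?opprK.
Qed.

End CutEdgeToggle.

End CubicRotation.

Unset Implicit Arguments.
Local Open Scope ring_scope.

Theorem lemma2p6 (V D : finType) (vert : D -> V) (alpha : D -> D)
    (rot : {perm D}) (M : {set D}) :
  dart_graph alpha ->
  trivalent vert ->
  connected_graph vert alpha ->
  spherical_embedding vert alpha rot ->
  perfect_matching vert alpha M ->
  (exists d0 : D, is_bridge vert alpha d0) ->
  two_factor_poly alpha rot M (1 : rat) = 0 /\
  num_2factors vert alpha M = 0%N.
Proof.
move=> [alphaK alpha_fixfree] tri conn [[rot_vert rot_conn] _] [edgeM degM] [d0 bridge].
have [A [c cutAc]] := bridge_one_edge_cut alphaK conn bridge.
have cM : c \in M := cut_edge_matched alphaK alpha_fixfree cutAc tri (conj edgeM degM).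
split; last exact: (num_2factors_cut_eq0 alphaK alpha_fixfree cutAc cM).
exact: (two_factor_poly1_eq0 alphaK alpha_fixfree tri rot_vert rot_conn edgeM degM cutAc cM).
Qed.
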